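(* Let $$J(\mu)=\int_{\max(-\mu,-1)}^{1}\frac{dx}{\sqrt{1-x^2}\sqrt{\mu+x}},\qquad \mu\ge-1.$$ Then there is an absolute constant $C$ such that $|\mu-1|\,|J'(\mu)|\le C\,J(\mu)$ for all $\mu>-1$, $\mu\neq1$.
   Context: $J$ is the kernel of the representation formula for the radial $2+1$-dimensional flat wave equation; it is smooth on $(-1,1)\cup(1,\infty)$. *)

From Stdlib Require Import Reals.
Open Scope R_scope.

Definition improper_integral (f : R -> R) (a b L : R) : Prop :=
  a < b /\
  (forall s t, a < s -> s <= t -> t < b -> inhabited (Riemann_integrable f s t)) /\
  (forall eps, 0 < eps -> exists delta, 0 < delta /\
     forall s t (pr : Riemann_integrable f s t),
       a < s -> s < a + delta -> b - delta < t -> t < b ->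
       Rabs (RiemannInt pr - L) < eps).

Definition J_integrand (mu x : R) : R :=
  / (sqrt (1 - x ^ 2) * sqrt (mu + x)).

Definition J_lower (mu : R) : R := Rmax (- mu) (-1).

Definition is_J_value (mu v : R) : Prop :=
  improper_integral (J_integrand mu) (J_lower mu) 1 v.

From Stdlib Require Import Reals Lra.
From Coquelicot Require Import Coquelicot.
Open Scope R_scope.

(* Substituting x = c - r cos t, which maps (0, PI) onto (max(-mu,-1), 1), removes
   both endpoint singularities: J(mu) is the proper integral over [0, PI] of
   (A t + mu B t)^(-1/2), with A = -cos, B = 1 when mu > 1 and
   A = (3 - cos)/2, B = -(1 + cos)/2 when mu < 1; in both cases A + mu B >= |mu - 1|.
   Differentiating under the integral sign, J'(mu) = -1/2 int B (A + mu B)^(-3/2),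
   and the pointwise inequality |mu - 1| |B| <= A + mu B gives
   |mu - 1| |J'(mu)| <= J(mu) / 2. *)

Lemma cos_open_bound (t : R) : 0 < t < PI -> -1 < cos t < 1.
Proof.
  intros [H0 HPI].
  split.
  - rewrite <- cos_PI. apply cos_decreasing_1; lra.
  - rewrite <- cos_0. apply cos_decreasing_1; lra.
Qed.

Lemma sin_sqr (t : R) : sin t ^ 2 = 1 - cos t ^ 2.
Proof. pose proof (sin2_cos2 t). unfold Rsqr in *. simpl. lra. Qed.

Lemma one_minus_cos_le (u : R) : 0 <= u <= PI -> 1 - cos u <= u ^ 2 / 2.
Proof.
  intros Hu.
  assert (Hcos : cos u = 1 - 2 * sin (u / 2) * sin (u / 2)).
  { rewrite <- cos_2a_sin. f_equal. field. }
  assert (Hpos : 0 <= sin (u / 2)) by (apply sin_ge_0; lra).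
  assert (Hle : sin (u / 2) <= u / 2).
  { destruct (Req_dec u 0) as [->|Hu0].
    - replace (0 / 2) with 0 by field. rewrite sin_0. lra.
    - left. apply sin_lt_x. lra. }
  rewrite Hcos. nra.
Qed.

Lemma continuous_of_continuity_pt (f : R -> R) (x : R) :
  continuity_pt f x -> continuous f x.
Proof. apply continuity_pt_filterlim. Qed.

Lemma RInt_cos_substitution (f G : R -> R) (a u w : R) :
  a < 1 ->
  (forall x, a < x < 1 -> continuous f x) ->
  (forall t, 0 < t < PI ->
     G t = (1 - a) / 2 * sin t * f ((1 + a) / 2 - (1 - a) / 2 * cos t)) ->
  0 < u < PI -> 0 < w < PI ->
  RInt f ((1 + a) / 2 - (1 - a) / 2 * cos u) ((1 + a) / 2 - (1 - a) / 2 * cos w)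
  = RInt G u w.
Proof.
  intros Ha Hf HG Hu Hw.
  assert (Hbetween : forall t, Rmin u w <= t <= Rmax u w -> 0 < t < PI).
  { intros t [H1 H2]. split.
    - eapply Rlt_le_trans; [|exact H1]. apply Rmin_glb_lt; lra.
    - eapply Rle_lt_trans; [exact H2|]. apply Rmax_lub_lt; lra. }
  rewrite <- (RInt_comp f (fun t => (1 + a) / 2 - (1 - a) / 2 * cos t)
                (fun t => (1 - a) / 2 * sin t) u w).
  - apply RInt_ext. intros t Ht. rewrite HG; [reflexivity|].
    apply Hbetween. lra.
  - intros t Ht. apply Hf.
    destruct (cos_open_bound t (Hbetween t Ht)). split; nra.
  - intros t _. split.
    + auto_derive; auto. ring.
    + apply continuous_of_continuity_pt, continuity_pt_mult.
      * apply continuity_pt_const. intros ? ?; reflexivity.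
      * apply continuity_sin.
Qed.

Lemma RInt_inner_approx (G : R -> R) (a u w b M : R) :
  (forall t, continuous G t) -> (forall t, Rabs (G t) <= M) ->
  a <= u -> u <= w -> w <= b ->
  Rabs (RInt G a b - RInt G u w) <= (u - a + (b - w)) * M.
Proof.
  intros HG HM Hau Huw Hwb.
  assert (Hex : forall x y, ex_RInt G x y).
  { intros. apply (ex_RInt_continuous (V := R_CompleteNormedModule)).
    intros; apply HG. }
  rewrite <- (RInt_Chasles G a u b), <- (RInt_Chasles G u w b) by auto.
  change (Rabs (RInt G a u + (RInt G u w + RInt G w b) - RInt G u w)
          <= (u - a + (b - w)) * M).
  replace (RInt G a u + (RInt G u w + RInt G w b) - RInt G u w)
    with (RInt G a u + RInt G w b) by ring.
  pose proof (abs_RInt_le_const G a u M Hau (Hex a u) (fun t _ => HM t)).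
  pose proof (abs_RInt_le_const G w b M Hwb (Hex w b) (fun t _ => HM t)).
  pose proof (Rabs_triang (RInt G a u) (RInt G w b)).
  lra.
Qed.
Lemma eq_of_dist_lt_eps (x y : R) :
  (forall eps, 0 < eps -> Rabs (x - y) < eps) -> x = y.
Proof.
  intros Hclose. destruct (Req_dec x y) as [Heq|Hneq]; [exact Heq|].
  assert (Hpos : 0 < Rabs (x - y)) by (apply Rabs_pos_lt; lra).
  specialize (Hclose (Rabs (x - y)) Hpos). lra.
Qed.

Lemma small_cos_cutoff (delta e : R) :
  0 < delta -> 0 < e -> exists u, 0 < u <= 1 /\ u <= e /\ 1 - cos u < delta.
Proof.
  intros Hdelta He.
  exists (Rmin 1 (Rmin delta e)).
  set (u := Rmin 1 (Rmin delta e)).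
  assert (Hu1 : u <= 1) by apply Rmin_l.
  assert (Hud : u <= delta) by (eapply Rle_trans; [apply Rmin_r | apply Rmin_l]).
  assert (Hue : u <= e) by (eapply Rle_trans; [apply Rmin_r | apply Rmin_r]).
  assert (Hu0 : 0 < u) by (apply Rmin_glb_lt; [lra | apply Rmin_glb_lt; lra]).
  pose proof PI2_1.
  pose proof (one_minus_cos_le u ltac:(lra)).
  repeat split; nra.
Qed.

Lemma improper_integral_cos_substitution (f G : R -> R) (a M v : R) :
  a < 1 ->
  (forall x, a < x < 1 -> continuous f x) ->
  (forall t, continuous G t) ->
  (forall t, Rabs (G t) <= M) ->
  (forall t, 0 < t < PI ->
     G t = (1 - a) / 2 * sin t * f ((1 + a) / 2 - (1 - a) / 2 * cos t)) ->
  improper_integral f a 1 v -> v = RInt G 0 PI.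
Proof.
  intros Ha Hf HG HM HGf [_ [Hint Hlim]].
  set (r := (1 - a) / 2). set (c := (1 + a) / 2).
  assert (Hr : 0 < r) by (unfold r; lra).
  assert (HM0 : 0 <= M) by (pose proof (Rabs_pos (G 0)); specialize (HM 0); lra).
  pose proof PI2_1 as HPI.
  apply eq_of_dist_lt_eps. intros eps2 Heps2.
  set (eps := eps2 / 2). assert (Heps : 0 < eps) by (unfold eps; lra).
  destruct (Hlim eps Heps) as [delta [Hdelta Hl]].
  (* The t-cutoffs [0, u] and [PI - u, PI] carry an integral of at most 2 u M < eps. *)
  destruct (small_cos_cutoff (delta / r) (eps / (2 * (M + 1))))
    as [u [Hu [Hue Hucos]]]; [apply Rdiv_lt_0_compat; lra.. |].
  assert (Hcos : -1 < cos u < 1) by (apply cos_open_bound; lra).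
  assert (Hcos0 : 0 < cos u) by (apply cos_gt_0; lra).
  assert (Hgap : r * (1 - cos u) < delta).
  { assert (r * (delta / r) = delta) by (field; lra). nra. }
  set (s := c - r * cos u). set (t := c - r * cos (PI - u)).
  assert (Ht : t = c + r * cos u) by (unfold t; rewrite Rtrigo_facts.cos_pi_minus; ring).
  destruct (Hint s t) as [pr]; unfold s, c, r in *; try nra.
  assert (Hv : Rabs (RiemannInt pr - v) < eps) by (apply Hl; nra).
  rewrite <- RInt_Reals in Hv. unfold t in Hv.
  rewrite (RInt_cos_substitution f G a u (PI - u)) in Hv by (auto; lra).
  assert (Htail := RInt_inner_approx G 0 u (PI - u) PI M HG HM
                     ltac:(lra) ltac:(lra) ltac:(lra)).
  assert (HuM : (u - 0 + (PI - (PI - u))) * M < eps).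
  { replace (u - 0 + (PI - (PI - u))) with (2 * u) by ring.
    apply (Rle_lt_trans _ (eps * (M / (M + 1)))).
    - replace (eps * (M / (M + 1))) with (2 * (eps / (2 * (M + 1))) * M) by (field; lra).
      nra.
    - assert (M / (M + 1) < 1) by (apply Rmult_lt_reg_r with (M + 1); field_simplify; lra).
      nra. }
  replace eps2 with (eps + eps) by (unfold eps; field).
  revert Hv Htail HuM. unfold Rabs. repeat destruct Rcase_abs; intros; lra.
Qed.

Lemma is_derive_inv_sqrt_affine (p q m : R) :
  0 < p + m * q ->
  is_derive (fun u => / sqrt (p + u * q)) m
    (- q / (2 * (sqrt (p + m * q) * (p + m * q)))).
Proof.
  intros Hpos.
  assert (Hs : 0 < sqrt (p + m * q)) by (apply sqrt_lt_R0; lra).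
  auto_derive.
  - repeat split; lra.
  - rewrite sqrt_sqrt by lra. field. lra.
Qed.

Lemma continuity_pt_inv_sqrt (f : R -> R) (x : R) :
  continuity_pt f x -> 0 < f x -> continuity_pt (fun y => / sqrt (f y)) x.
Proof.
  intros Hf Hpos.
  apply continuity_pt_inv.
  - apply continuity_pt_comp with (f2 := sqrt); auto. apply sqrt_continuity_pt. lra.
  - apply Rgt_not_eq, sqrt_lt_R0. lra.
Qed.

Lemma abs_derive_inv_sqrt_le (k q p : R) :
  0 < p -> k * Rabs q <= p ->
  k * Rabs (- q / (2 * (sqrt p * p))) <= 1 / 2 * / sqrt p.
Proof.
  intros Hp Hkq.
  assert (Hs : 0 < sqrt p) by (apply sqrt_lt_R0; lra).
  unfold Rdiv. rewrite Rabs_mult, Rabs_Ropp, Rabs_inv.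
  rewrite (Rabs_right (2 * (sqrt p * p))) by nra.
  replace (1 * / 2 * / sqrt p) with (p * / (2 * (sqrt p * p))) by (field; lra).
  replace (k * (Rabs q * / (2 * (sqrt p * p)))) with (k * Rabs q * / (2 * (sqrt p * p)))
    by ring.
  apply Rmult_le_compat_r; [|exact Hkq].
  left. apply Rinv_0_lt_compat. nra.
Qed.

Lemma open_interval_ball (lo hi mu : R) :
  lo < mu < hi -> exists e : posreal, forall y, Rabs (y - mu) < e -> lo < y < hi.
Proof.
  intros Hmu.
  assert (He : 0 < Rmin (mu - lo) (hi - mu)) by (apply Rmin_glb_lt; lra).
  exists (mkposreal _ He). intros y Hy. simpl in Hy.
  pose proof (Rmin_l (mu - lo) (hi - mu)). pose proof (Rmin_r (mu - lo) (hi - mu)).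
  apply Rabs_lt_between' in Hy. lra.
Qed.

Lemma locally_open_interval (lo hi mu : R) (Q : R -> Prop) :
  lo < mu < hi -> (forall y, lo < y < hi -> Q y) -> locally mu Q.
Proof.
  intros Hmu HQ. destruct (open_interval_ball lo hi mu Hmu) as [e He].
  exists e. intros y Hy. apply HQ, He, Hy.
Qed.

Section InvSqrtAffine.

Variables A B : R -> R.
Hypothesis A_cont : continuity A.
Hypothesis B_cont : continuity B.

Lemma continuity_pt_affine (m t : R) : continuity_pt (fun y => A y + m * B y) t.
Proof.
  apply continuity_pt_plus; [apply A_cont|].
  apply continuity_pt_mult; [|apply B_cont].
  apply continuity_pt_const. intros ? ?; reflexivity.
Qed.

Lemma continuity_2d_pt_affine (m t : R) :
  continuity_2d_pt (fun u v => A v + u * B v) m t.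
Proof.
  apply continuity_2d_pt_plus.
  - apply (continuity_1d_2d_pt_comp A (fun _ v => v)).
    + apply A_cont.
    + apply continuity_2d_pt_id2.
  - apply continuity_2d_pt_mult; [apply continuity_2d_pt_id1|].
    apply (continuity_1d_2d_pt_comp B (fun _ v => v)).
    + apply B_cont.
    + apply continuity_2d_pt_id2.
Qed.

Lemma continuity_2d_pt_derive_inv_sqrt_affine (m t : R) :
  0 < A t + m * B t ->
  continuity_2d_pt
    (fun u v => - B v / (2 * (sqrt (A v + u * B v) * (A v + u * B v)))) m t.
Proof.
  intros Hpos.
  assert (Hs : 0 < sqrt (A t + m * B t)) by (apply sqrt_lt_R0; lra).
  apply continuity_2d_pt_mult.
  - apply continuity_2d_pt_opp, (continuity_1d_2d_pt_comp B (fun _ v => v)).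
    + apply B_cont.
    + apply continuity_2d_pt_id2.
  - apply continuity_2d_pt_inv; [|nra].
    apply continuity_2d_pt_mult; [apply continuity_2d_pt_const|].
    apply continuity_2d_pt_mult; [|apply continuity_2d_pt_affine].
    apply (continuity_1d_2d_pt_comp sqrt (fun u v => A v + u * B v)).
    + apply sqrt_continuity_pt. lra.
    + apply continuity_2d_pt_affine.
Qed.

Lemma is_derive_RInt_inv_sqrt_affine (a b lo hi mu : R) :
  lo < mu < hi ->
  (forall m t, lo < m < hi -> 0 < A t + m * B t) ->
  is_derive (fun m => RInt (fun t => / sqrt (A t + m * B t)) a b) mu
    (RInt (fun t => - B t / (2 * (sqrt (A t + mu * B t) * (A t + mu * B t)))) a b).
Proof.
  intros Hmu Hpos.
  rewrite (RInt_ext _ (fun t => Derive (fun u => / sqrt (A t + u * B t)) mu)).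
  2: { intros t _. symmetry. apply is_derive_unique, is_derive_inv_sqrt_affine; auto. }
  apply (is_derive_RInt_param (fun m t => / sqrt (A t + m * B t))).
  - apply (locally_open_interval lo hi); auto. intros m Hm t _. eexists. apply is_derive_inv_sqrt_affine; auto.
  - intros t _.
    apply continuity_2d_pt_ext_loc
      with (f := fun u v => - B v / (2 * (sqrt (A v + u * B v) * (A v + u * B v)))).
    + destruct (open_interval_ball lo hi mu Hmu) as [e He].
      exists e. intros u v Hu _.
      symmetry. apply is_derive_unique, is_derive_inv_sqrt_affine, Hpos, He, Hu.
    + apply continuity_2d_pt_derive_inv_sqrt_affine; auto.
  - apply (locally_open_interval lo hi); auto. intros m Hm.
    apply (ex_RInt_continuous (V := R_CompleteNormedModule)). intros t _.
    apply continuous_of_continuity_pt, continuity_pt_inv_sqrt; auto.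
    apply continuity_pt_affine.
Qed.

Lemma RInt_derive_inv_sqrt_affine_bound (a b mu k : R) :
  a <= b -> 0 <= k ->
  (forall t, 0 < A t + mu * B t) ->
  (forall t, k * Rabs (B t) <= A t + mu * B t) ->
  k * Rabs (RInt (fun t => - B t / (2 * (sqrt (A t + mu * B t) * (A t + mu * B t)))) a b)
  <= 1 / 2 * RInt (fun t => / sqrt (A t + mu * B t)) a b.
Proof.
  intros Hab Hk Hpos Hdom.
  set (P t := A t + mu * B t).
  set (D t := - B t / (2 * (sqrt (P t) * P t))).
  set (G t := / sqrt (P t)).
  assert (HP : forall t, continuity_pt P t) by (intro; apply continuity_pt_affine).
  assert (HD : forall t, continuity_pt D t).
  { intros t. assert (0 < sqrt (P t)) by (apply sqrt_lt_R0, Hpos).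
    apply continuity_pt_div; [apply continuity_pt_opp, B_cont| |].
    - apply continuity_pt_mult; [apply continuity_pt_const; intros ? ?; reflexivity|].
      apply continuity_pt_mult; [|apply HP].
      apply continuity_pt_comp with (f2 := sqrt); [apply HP|].
      apply sqrt_continuity_pt. specialize (Hpos t). unfold P. lra.
    - specialize (Hpos t). fold (P t) in Hpos. nra. }
  assert (HexG : ex_RInt G a b).
  { apply (ex_RInt_continuous (V := R_CompleteNormedModule)). intros t _.
    apply continuous_of_continuity_pt, continuity_pt_inv_sqrt; [apply HP | apply Hpos]. }
  assert (HexD : ex_RInt D a b).
  { apply (ex_RInt_continuous (V := R_CompleteNormedModule)). intros t _.
    apply continuous_of_continuity_pt, HD. }
  assert (HexAbsD : ex_RInt (fun t => Rabs (D t)) a b).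
  { apply (ex_RInt_continuous (V := R_CompleteNormedModule)). intros t _.
    apply continuous_of_continuity_pt, continuity_pt_comp with (f2 := Rabs).
    - apply HD.
    - apply Rcontinuity_abs. }
  assert (Hpointwise : forall t, k * Rabs (D t) <= 1 / 2 * G t)
    by (intros t; apply abs_derive_inv_sqrt_le; [apply Hpos | apply Hdom]).
  apply Rle_trans with (k * RInt (fun t => Rabs (D t)) a b).
  { apply Rmult_le_compat_l; [exact Hk|]. apply abs_RInt_le; auto. }
  change (scal k (RInt (fun t => Rabs (D t)) a b) <= scal (1 / 2) (RInt G a b)).
  rewrite <- (RInt_scal (V := R_CompleteNormedModule) _ a b k HexAbsD).
  rewrite <- (RInt_scal (V := R_CompleteNormedModule) _ a b (1 / 2) HexG).
  apply RInt_le; auto.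
  - exact (ex_RInt_scal (V := R_NormedModule) _ a b k HexAbsD).
  - exact (ex_RInt_scal (V := R_NormedModule) _ a b (1 / 2) HexG).
Qed.

Lemma derivable_pt_lim_bound_of_inv_sqrt_affine (F : R -> R) (a b lo hi mu k : R) :
  a <= b -> lo < mu < hi -> 0 <= k ->
  (forall m t, lo < m < hi -> 0 < A t + m * B t) ->
  (forall m, lo < m < hi -> F m = RInt (fun t => / sqrt (A t + m * B t)) a b) ->
  (forall t, k * Rabs (B t) <= A t + mu * B t) ->
  exists l, derivable_pt_lim F mu l /\ k * Rabs l <= 1 / 2 * F mu.
Proof.
  intros Hab Hmu Hk Hpos HF Hdom.
  eexists. split.
  - apply is_derive_Reals.
    apply is_derive_ext_loc with (f := fun m => RInt (fun t => / sqrt (A t + m * B t)) a b).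
    + apply (locally_open_interval lo hi); auto. intros y Hy. symmetry. apply HF, Hy.
    + apply (is_derive_RInt_inv_sqrt_affine a b lo hi); auto.
  - rewrite (HF mu Hmu).
    apply RInt_derive_inv_sqrt_affine_bound; auto.
Qed.

End InvSqrtAffine.

Lemma J_integrand_continuous (mu x : R) :
  0 < 1 - x ^ 2 -> 0 < mu + x -> continuous (J_integrand mu) x.
Proof.
  intros H1 H2. apply continuous_of_continuity_pt. unfold J_integrand.
  assert (0 < sqrt (1 - x ^ 2)) by (apply sqrt_lt_R0; lra).
  assert (0 < sqrt (mu + x)) by (apply sqrt_lt_R0; lra).
  apply continuity_pt_inv; [|nra].
  apply continuity_pt_mult.
  - apply continuity_pt_comp with (f1 := fun y => 1 - y ^ 2).
    + apply derivable_continuous_pt. reg.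
    + apply sqrt_continuity_pt. lra.
  - apply continuity_pt_comp with (f1 := fun y => mu + y).
    + apply derivable_continuous_pt. reg.
    + apply sqrt_continuity_pt. lra.
Qed.

Lemma J_integrand_rescale (mu x k Q : R) :
  0 < k -> 0 < Q -> 0 <= 1 - x ^ 2 -> 0 <= mu + x ->
  (1 - x ^ 2) * (mu + x) = k ^ 2 * Q ->
  k * J_integrand mu x = / sqrt Q.
Proof.
  intros Hk HQ H1 H2 E. unfold J_integrand.
  rewrite <- sqrt_mult, E, sqrt_mult, sqrt_pow2 by (try apply pow2_ge_0; lra).
  assert (0 < sqrt Q) by (apply sqrt_lt_R0; lra).
  field. lra.
Qed.

Lemma is_J_value_cos_substitution (mu a L v : R) (Q : R -> R) :
  -1 < mu -> J_lower mu = a -> 0 < L ->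
  continuity Q -> (forall t, L <= Q t) ->
  (forall t, 0 < t < PI ->
     let x := (1 + a) / 2 - (1 - a) / 2 * cos t in
     (1 - x ^ 2) * (mu + x) = ((1 - a) / 2 * sin t) ^ 2 * Q t) ->
  is_J_value mu v -> v = RInt (fun t => / sqrt (Q t)) 0 PI.
Proof.
  intros Hmu Ha HL HQ HLQ Hid.
  unfold J_lower in Ha.
  assert (Hlow : forall x, a < x -> -mu < x /\ -1 < x).
  { intros x Hx. rewrite <- Ha in Hx.
    split; eapply Rle_lt_trans; eauto; [apply Rmax_l | apply Rmax_r]. }
  assert (Ha1 : a < 1) by (rewrite <- Ha; apply Rmax_lub_lt; lra).
  assert (HsL : 0 < sqrt L) by (apply sqrt_lt_R0; lra).
  unfold is_J_value, J_lower. rewrite Ha.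
  apply improper_integral_cos_substitution with (M := / sqrt L); [exact Ha1 | | | |].
  - intros x Hx. destruct (Hlow x (proj1 Hx)).
    apply J_integrand_continuous; nra.
  - intros t. apply continuous_of_continuity_pt, continuity_pt_inv_sqrt; [apply HQ|].
    specialize (HLQ t). lra.
  - intros t. specialize (HLQ t).
    assert (sqrt L <= sqrt (Q t)) by (apply sqrt_le_1; lra).
    rewrite Rabs_right; [apply Rinv_le_contravar; lra|].
    left. apply Rinv_0_lt_compat, sqrt_lt_R0. lra.
  - intros t Ht. specialize (Hid t Ht). simpl in Hid.
    set (x := (1 + a) / 2 - (1 - a) / 2 * cos t) in *.
    destruct (cos_open_bound t Ht).
    assert (Hsin : 0 < sin t) by (apply sin_gt_0; lra).
    assert (Hx : a < x < 1) by (unfold x; split; nra).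
    destruct (Hlow x (proj1 Hx)).
    specialize (HLQ t).
    symmetry. apply J_integrand_rescale; [nra | lra | nra | lra | exact Hid].
Qed.

Lemma is_J_value_gt1 (mu v : R) :
  1 < mu -> is_J_value mu v -> v = RInt (fun t => / sqrt (mu - cos t)) 0 PI.
Proof.
  intros Hmu.
  apply (is_J_value_cos_substitution mu (-1) (mu - 1));
    [lra | unfold J_lower; apply Rmax_right; lra | lra | | |].
  - intros t. apply continuity_pt_minus; [|apply continuity_cos].
    apply continuity_pt_const. intros ? ?; reflexivity.
  - intros t. pose proof (COS_bound t). lra.
  - intros t _ x. unfold x.
    replace (((1 - -1) / 2 * sin t) ^ 2) with (sin t ^ 2) by field.
    rewrite sin_sqr. field.
Qed.

Lemma is_J_value_lt1 (mu v : R) :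
  -1 < mu < 1 -> is_J_value mu v ->
  v = RInt (fun t => / sqrt ((3 - cos t - mu * (1 + cos t)) / 2)) 0 PI.
Proof.
  intros Hmu.
  apply (is_J_value_cos_substitution mu (- mu) (1 - mu));
    [lra | unfold J_lower; apply Rmax_left; lra | lra | | |].
  - intros t. apply continuity_pt_div; [| |discrR].
    + apply continuity_pt_minus.
      * apply continuity_pt_minus; [|apply continuity_cos].
        apply continuity_pt_const. intros ? ?; reflexivity.
      * apply continuity_pt_mult; [apply continuity_pt_const; intros ? ?; reflexivity|].
        apply continuity_pt_plus; [|apply continuity_cos].
        apply continuity_pt_const. intros ? ?; reflexivity.
    + apply continuity_pt_const. intros ? ?; reflexivity.
  - intros t. pose proof (COS_bound t). nra.
  - intros t _ x. unfold x.
    replace (((1 - - mu) / 2 * sin t) ^ 2) with (((1 + mu) / 2) ^ 2 * sin t ^ 2) by field.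
    rewrite sin_sqr. field.
Qed.

Section DerivativeOfJ.

Variable J : R -> R.
Hypothesis J_value : forall mu, -1 < mu -> mu <> 1 -> is_J_value mu (J mu).

Lemma J_derivative_bound_gt1 (mu : R) :
  1 < mu ->
  exists l, derivable_pt_lim J mu l /\ Rabs (mu - 1) * Rabs l <= 1 / 2 * J mu.
Proof.
  intros Hmu.
  assert (HA : continuity (fun t => - cos t))
    by (intros t; apply continuity_pt_opp, continuity_cos).
  assert (HB : continuity (fun _ => 1))
    by (intros t; apply continuity_pt_const; intros ? ?; reflexivity).
  apply (derivable_pt_lim_bound_of_inv_sqrt_affine _ _ HA HB J 0 PI 1 (mu + 1)).
  - pose proof PI_RGT_0. lra.
  - lra.
  - apply Rabs_pos.
  - intros m t Hm. pose proof (COS_bound t). lra.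
  - intros m Hm. rewrite (is_J_value_gt1 m (J m)) by (try apply J_value; lra).
    apply RInt_ext. intros t _. f_equal. f_equal. ring.
  - intros t. pose proof (COS_bound t).
    rewrite Rabs_R1, Rabs_right by lra. lra.
Qed.

Lemma J_derivative_bound_lt1 (mu : R) :
  -1 < mu < 1 ->
  exists l, derivable_pt_lim J mu l /\ Rabs (mu - 1) * Rabs l <= 1 / 2 * J mu.
Proof.
  intros Hmu.
  assert (HA : continuity (fun t => (3 - cos t) / 2)).
  { intros t. apply continuity_pt_div; [| |discrR].
    - apply continuity_pt_minus; [|apply continuity_cos].
      apply continuity_pt_const. intros ? ?; reflexivity.
    - apply continuity_pt_const. intros ? ?; reflexivity. }
  assert (HB : continuity (fun t => - (1 + cos t) / 2)).
  { intros t. apply continuity_pt_div; [| |discrR].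
    - apply continuity_pt_opp, continuity_pt_plus; [|apply continuity_cos].
      apply continuity_pt_const. intros ? ?; reflexivity.
    - apply continuity_pt_const. intros ? ?; reflexivity. }
  apply (derivable_pt_lim_bound_of_inv_sqrt_affine _ _ HA HB J 0 PI (-1) 1).
  - pose proof PI_RGT_0. lra.
  - lra.
  - apply Rabs_pos.
  - intros m t Hm. pose proof (COS_bound t). nra.
  - intros m Hm. rewrite (is_J_value_lt1 m (J m)) by (try apply J_value; lra).
    apply RInt_ext. intros t _. f_equal. f_equal. field.
  - intros t. pose proof (COS_bound t).
    rewrite Rabs_left, Rabs_left1 by lra. nra.
Qed.

End DerivativeOfJ.

Theorem mainTheorem20 :
  exists C : R,
    forall J : R -> R,
      (forall mu, -1 < mu -> mu <> 1 -> is_J_value mu (J mu)) ->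
      forall mu, -1 < mu -> mu <> 1 ->
        exists l, derivable_pt_lim J mu l /\
                  Rabs (mu - 1) * Rabs l <= C * J mu.
Proof.
  exists (1 / 2). intros J HJ mu Hmu Hne.
  destruct (Rlt_or_le 1 mu) as [Hgt | Hle].
  - exact (J_derivative_bound_gt1 J HJ mu Hgt).
  - apply (J_derivative_bound_lt1 J HJ). lra.
Qed.
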